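(* Consider the hidden Markov model and the procedure $\texttt{VRSO-PE}$ described in the context. Let $\boldsymbol{\phi}^{(0)}\in\boldsymbol{\Phi}$ and let input quantities $\{\widehat{\boldsymbol{\alpha}}^{(0)}_t,\widehat{\boldsymbol{\beta}}^{(0)}_t,\widehat{\boldsymbol{\gamma}}^{(0)}_t,\widehat{\boldsymbol{\xi}}^{(0)}_t\}_{t=1}^T$ be given. Suppose that (1) $\widehat{\boldsymbol{\alpha}}^{(0)}_t=\boldsymbol{\alpha}_t(\boldsymbol{\phi}^{(0)})$ and $\widehat{\boldsymbol{\beta}}^{(0)}_t=\boldsymbol{\beta}_t(\boldsymbol{\phi}^{(0)})$ for all $t=1,\ldots,T$; (2) $\widehat{\boldsymbol{\gamma}}^{(0)}_t=\boldsymbol{\gamma}_t(\boldsymbol{\phi}^{(0)})$ and $\widehat{\boldsymbol{\xi}}^{(0)}_t=\boldsymbol{\xi}_t(\boldsymbol{\phi}^{(0)})$ for all $t=1,\ldots,T$; (3) $\nabla F\big(\boldsymbol{\phi}^{(0)}\mid \boldsymbol{\gamma}(\boldsymbol{\phi}^{(0)}),\boldsymbol{\xi}(\boldsymbol{\phi}^{(0)})\big)=0$. Then, with probability 1, $$\texttt{VRSO-PE}\Big(\{\widehat{\boldsymbol{\alpha}}^{(0)}_t,\widehat{\boldsymbol{\beta}}^{(0)}_t,\widehat{\boldsymbol{\gamma}}^{(0)}_t,\widehat{\boldsymbol{\xi}}^{(0)}_t\}_{t=1}^T,\ \boldsymbol{\phi}^{(0)},\ \lambda,\ A,\ P,\ M\Big)=\boldsymbol{\phi}^{(0)}$$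 for all step sizes $\lambda\in\mathbb{R}$, all $A\in\{\mathrm{SAGA},\mathrm{SVRG}\}$, all $P\in\{\texttt{True},\texttt{False}\}$ and all $M\in\mathbb{N}$.
   Context: Setting (hidden Markov model). Observations $\mathbf{y}=(y_1,\ldots,y_T)$; $N$ hidden states; parameter $\boldsymbol{\phi}=(\boldsymbol{\theta},\boldsymbol{\eta})\in\boldsymbol{\Phi}$. The initial distribution is a row vector $\boldsymbol{\delta}(\boldsymbol{\eta})$, the transition matrix is $\boldsymbol{\Gamma}(\boldsymbol{\eta})$ (entries $\Gamma_{ij}$), and $P(y;\boldsymbol{\theta})=\mathrm{diag}\big(f^{(1)}(y;\boldsymbol{\theta}),\ldots,f^{(N)}(y;\boldsymbol{\theta})\big)$ collects the state-dependent emission densities; all these are positive and differentiable in $\boldsymbol{\phi}$. Forward/backward quantities (row vectors): $\boldsymbol{\alpha}_1(\boldsymbol{\phi})=\boldsymbol{\delta}(\boldsymbol{\eta})P(y_1;\boldsymbol{\theta})$, $\boldsymbol{\alpha}_t(\boldsymbol{\phi})=\boldsymbol{\alpha}_{t-1}(\boldsymbol{\phi})\boldsymbol{\Gamma}(\boldsymbol{\eta})P(y_t;\boldsymbol{\theta})$ for $t\ge 2$; $\boldsymbol{\beta}_T(\boldsymbol{\phi})=\mathbf{1}$, $\boldsymbol{\beta}_t(\boldsymbol{\phi})^\top=\boldsymbol{\Gamma}(\boldsymbol{\eta})P(y_{t+1};\boldsymbol{\theta})\boldsymbol{\beta}_{t+1}(\boldsymbol{\phi})^\top$ for $t<T$.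 Write $\widetilde{\boldsymbol{\alpha}}_t(\mathbf{a},\boldsymbol{\phi})$ for the map $\boldsymbol{\delta}(\boldsymbol{\eta})P(y_1;\boldsymbol{\theta})$ if $t=1$ and $\mathbf{a}\boldsymbol{\Gamma}(\boldsymbol{\eta})P(y_t;\boldsymbol{\theta})$ if $t\ge2$ (so $\widetilde{\boldsymbol{\alpha}}_t(\boldsymbol{\alpha}_{t-1}(\boldsymbol{\phi}),\boldsymbol{\phi})=\boldsymbol{\alpha}_t(\boldsymbol{\phi})$), and analogously $\widetilde{\boldsymbol{\beta}}_t(\mathbf{b},\boldsymbol{\phi})$ equal to $\mathbf{1}$ if $t=T$ and $(\boldsymbol{\Gamma}(\boldsymbol{\eta})P(y_{t+1};\boldsymbol{\theta})\mathbf{b}^\top)^\top$ if $t<T$. Conditional probabilities: $\widetilde{\boldsymbol{\gamma}}_t(\mathbf{a},\mathbf{b})=(\mathbf{a}\circ\mathbf{b})/(\mathbf{a}\mathbf{b}^\top)$ and, for $t\ge2$, $\widetilde{\boldsymbol{\xi}}_t(\mathbf{a}',\mathbf{b},\boldsymbol{\phi})=\mathrm{diag}(\mathbf{a}')\boldsymbol{\Gamma}(\boldsymbol{\eta})P(y_t;\boldsymbol{\theta})\mathrm{diag}(\mathbf{b})\big/\big(\mathbf{a}'\boldsymbol{\Gamma}(\boldsymbol{\eta})P(y_t;\boldsymbol{\theta})\mathbf{b}^\top\big)$; set $\boldsymbol{\gamma}_t(\boldsymbol{\phi})=\widetilde{\boldsymbol{\gamma}}_t(\boldsymbol{\alpha}_t(\boldsymbol{\phi}),\boldsymbol{\beta}_t(\boldsymbol{\phi}))$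 and $\boldsymbol{\xi}_t(\boldsymbol{\phi})=\widetilde{\boldsymbol{\xi}}_t(\boldsymbol{\alpha}_{t-1}(\boldsymbol{\phi}),\boldsymbol{\beta}_t(\boldsymbol{\phi}),\boldsymbol{\phi})$ (these are the smoothed state and transition probabilities); $\boldsymbol{\gamma}(\boldsymbol{\phi}),\boldsymbol{\xi}(\boldsymbol{\phi})$ denote the collections over $t$. Objective: $F_t(\boldsymbol{\phi}\mid\boldsymbol{\gamma}_t,\boldsymbol{\xi}_t)=-\Big[\mathbb{1}\{t=1\}\sum_i\gamma_1(i)\log\delta_i(\boldsymbol{\eta})+\mathbb{1}\{t\ge2\}\sum_{i,j}\xi_t(i,j)\log\Gamma_{ij}(\boldsymbol{\eta})+\sum_i\gamma_t(i)\log f^{(i)}(y_t;\boldsymbol{\theta})\Big]$ and $F(\boldsymbol{\phi}\mid\boldsymbol{\gamma},\boldsymbol{\xi})=\frac1T\sum_{t=1}^TF_t(\boldsymbol{\phi}\mid\boldsymbol{\gamma}_t,\boldsymbol{\xi}_t)$, i.e. $-1/T$ times the EM expected complete-data log-likelihood; gradients are with respect to $\boldsymbol{\phi}$. Procedure $\texttt{VRSO-PE}(\{\widehat{\boldsymbol{\alpha}}^{(0)}_t,\widehat{\boldsymbol{\beta}}^{(0)}_t,\widehat{\boldsymbol{\gamma}}^{(0)}_t,\widehat{\boldsymbol{\xi}}^{(0)}_t\}_{t=1}^T,\boldsymbol{\phi}^{(0)},\lambda,A,P,M)$: initialize gradient tables $\widehat\nabla F^{(0)}_t=\nabla F_t(\boldsymbol{\phi}^{(0)}\mid\widehat{\boldsymbol{\gamma}}^{(0)}_t,\widehat{\boldsymbol{\xi}}^{(0)}_t)$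 and $\widehat\nabla F^{(0)}=\frac1T\sum_t\widehat\nabla F^{(0)}_t$. For $m=0,\ldots,M-1$: draw $t_m$ uniformly from $\{1,\ldots,T\}$. If $P=\texttt{True}$, set $\widehat{\boldsymbol{\alpha}}^{(m+1)}_{t_m}=\widetilde{\boldsymbol{\alpha}}_{t_m}(\widehat{\boldsymbol{\alpha}}^{(m)}_{t_m-1},\boldsymbol{\phi}^{(m)})$, $\widehat{\boldsymbol{\beta}}^{(m+1)}_{t_m}=\widetilde{\boldsymbol{\beta}}_{t_m}(\widehat{\boldsymbol{\beta}}^{(m)}_{t_m+1},\boldsymbol{\phi}^{(m)})$, $\widehat{\boldsymbol{\gamma}}^{(m+1)}_{t_m}=\widetilde{\boldsymbol{\gamma}}_{t_m}(\widehat{\boldsymbol{\alpha}}^{(m+1)}_{t_m},\widehat{\boldsymbol{\beta}}^{(m+1)}_{t_m})$, $\widehat{\boldsymbol{\xi}}^{(m+1)}_{t_m}=\widetilde{\boldsymbol{\xi}}_{t_m}(\widehat{\boldsymbol{\alpha}}^{(m+1)}_{t_m-1},\widehat{\boldsymbol{\beta}}^{(m+1)}_{t_m},\boldsymbol{\phi}^{(m)})$; all other entries (and all entries if $P=\texttt{False}$) are copied unchanged from step $m$. Then $\boldsymbol{\phi}^{(m+1)}=\boldsymbol{\phi}^{(m)}-\lambda\big[\nabla F_{t_m}(\boldsymbol{\phi}^{(m)}\mid\widehat{\boldsymbol{\gamma}}^{(m+1)}_{t_m},\widehat{\boldsymbol{\xi}}^{(m+1)}_{t_m})-\widehat\nabla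 F^{(m)}_{t_m}+\widehat\nabla F^{(m)}\big]$. If $A=\mathrm{SAGA}$: $\widehat\nabla F^{(m+1)}_{t_m}=\nabla F_{t_m}(\boldsymbol{\phi}^{(m)}\mid\widehat{\boldsymbol{\gamma}}^{(m+1)}_{t_m},\widehat{\boldsymbol{\xi}}^{(m+1)}_{t_m})$, $\widehat\nabla F^{(m+1)}=\widehat\nabla F^{(m)}+\frac1T(\widehat\nabla F^{(m+1)}_{t_m}-\widehat\nabla F^{(m)}_{t_m})$, other table entries unchanged; if $A=\mathrm{SVRG}$ the gradient tables are left unchanged. The output is $\boldsymbol{\phi}^{(M)}$. *)

From HB Require Import structures.
From mathcomp Require Import all_boot all_order all_algebra.
From mathcomp Require Import all_classical all_reals all_analysis.
Set Implicit Arguments. Unset Strict Implicit. Unset Printing Implicit Defensive.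
Import Order.TTheory GRing.Theory Num.Theory.
Import numFieldNormedType.Exports.
Local Open Scope ring_scope.

(* Conventions:
   - time indices t are natural numbers, meaningful for 1 <= t <= T;
   - hidden states are 'I_N; row vectors 'rV[R]_N, matrices 'M[R]_N;
   - parameter phi (= (theta, eta)) is a row vector 'rV[R]_d;
   - init phi   : the initial distribution delta(eta)   (row vector)
     Gam phi    : the transition matrix Gamma(eta)
     emis y phi : the row vector (f^(1)(y;theta), ..., f^(N)(y;theta))
     obs t      : the observation y_t. *)

Section HMM.
Variables (R : realType) (Y : Type) (N d : nat).
Variables (init : 'rV[R]_d -> 'rV[R]_N) (Gam : 'rV[R]_d -> 'M[R]_N)
          (emis : Y -> 'rV[R]_d -> 'rV[R]_N) (obs : nat -> Y) (T : nat).

Definition Pm (t : nat) (phi : 'rV[R]_d) : 'M[R]_N := diag_mx (emis (obs t) phi).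

Definition alpha_tilde (t : nat) (a : 'rV[R]_N) (phi : 'rV[R]_d) : 'rV[R]_N :=
  if t == 1%N then init phi *m Pm 1 phi else a *m Gam phi *m Pm t phi.

Definition beta_tilde (t : nat) (b : 'rV[R]_N) (phi : 'rV[R]_d) : 'rV[R]_N :=
  if t == T then const_mx 1 else (Gam phi *m Pm t.+1 phi *m b^T)^T.

(* alpha_t(phi), t >= 1 (alpha_0 is an unused dummy) *)
Fixpoint alpha (t : nat) (phi : 'rV[R]_d) : 'rV[R]_N :=
  match t with
  | 0 => 0
  | t'.+1 => alpha_tilde t'.+1 (alpha t' phi) phi
  end.

Fixpoint beta_aux (n t : nat) (phi : 'rV[R]_d) : 'rV[R]_N :=
  match n with
  | 0 => const_mx 1
  | n'.+1 => beta_tilde t (beta_aux n' t.+1 phi) phi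
  end.

Definition beta (t : nat) (phi : 'rV[R]_d) : 'rV[R]_N := beta_aux (T - t) t phi.

Definition gamma_tilde (a b : 'rV[R]_N) : 'rV[R]_N :=
  ((a *m b^T) 0 0)^-1 *: \row_i (a 0 i * b 0 i).

Definition xi_tilde (t : nat) (a' b : 'rV[R]_N) (phi : 'rV[R]_d) : 'M[R]_N :=
  ((a' *m Gam phi *m Pm t phi *m b^T) 0 0)^-1 *:
    (diag_mx a' *m Gam phi *m Pm t phi *m diag_mx b).

Definition gamma (t : nat) (phi : 'rV[R]_d) : 'rV[R]_N :=
  gamma_tilde (alpha t phi) (beta t phi).

Definition xi (t : nat) (phi : 'rV[R]_d) : 'M[R]_N :=
  xi_tilde t (alpha t.-1 phi) (beta t phi) phi.

Definition Ft (t : nat) (g : 'rV[R]_N) (x : 'M[R]_N) (phi : 'rV[R]_d) : R :=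
  - ((if t == 1%N then \sum_i g 0 i * ln (init phi 0 i) else 0)
     + (if (2 <= t)%N then \sum_i \sum_j x i j * ln (Gam phi i j) else 0)
     + \sum_i g 0 i * ln (emis (obs t) phi 0 i)).

Definition Ffull (gs : nat -> 'rV[R]_N) (xs : nat -> 'M[R]_N) (phi : 'rV[R]_d) : R :=
  (T%:R)^-1 * \sum_(1 <= t < T.+1) Ft t (gs t) (xs t) phi.

End HMM.

Definition grad {R : realType} {d : nat} (f : 'rV[R]_d -> R) (phi : 'rV[R]_d)
  : 'rV[R]_d := \row_k ('D_(delta_mx 0 k) f phi).

Inductive vr_alg := SAGA | SVRG.

Definition upd {X : Type} (f : nat -> X) (t : nat) (v : X) : nat -> X :=
  fun s => if s == t then v else f s.

Section VRSO.
Variables (R : realType) (Y : Type) (N d : nat).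
Variables (init : 'rV[R]_d -> 'rV[R]_N) (Gam : 'rV[R]_d -> 'M[R]_N)
          (emis : Y -> 'rV[R]_d -> 'rV[R]_N) (obs : nat -> Y) (T : nat).

Definition gradFt (t : nat) (g : 'rV[R]_N) (x : 'M[R]_N) (phi : 'rV[R]_d) : 'rV[R]_d :=
  grad (Ft init Gam emis obs t g x) phi.

Record vr_state := VRState {
  st_a : nat -> 'rV[R]_N;
  st_b : nat -> 'rV[R]_N;
  st_g : nat -> 'rV[R]_N;
  st_x : nat -> 'M[R]_N;
  st_phi : 'rV[R]_d;
  st_G : nat -> 'rV[R]_d;
  st_Gbar : 'rV[R]_d
}.

Definition vr_step (lam : R) (A : vr_alg) (P : bool) (s : vr_state) (t : nat)
  : vr_state :=
  let phi := st_phi s in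
  let a' := if P then upd (st_a s) t (alpha_tilde init Gam emis obs t (st_a s t.-1) phi)
            else st_a s in
  let b' := if P then upd (st_b s) t (beta_tilde Gam emis obs T t (st_b s t.+1) phi)
            else st_b s in
  let g' := if P then upd (st_g s) t (gamma_tilde (a' t) (b' t)) else st_g s in
  let x' := if P then upd (st_x s) t (xi_tilde Gam emis obs t (a' t.-1) (b' t) phi)
            else st_x s in
  let gr := gradFt t (g' t) (x' t) phi in
  let phi' := phi - lam *: (gr - st_G s t + st_Gbar s) in
  let G' := if A is SAGA then upd (st_G s) t gr else st_G s in
  let Gbar' := if A is SAGA then st_Gbar s + (T%:R)^-1 *: (G' t - st_G s t)
               else st_Gbar s in
  VRState a' b' g' x' phi' G' Gbar'.

Definition vrso_pe (ah bh gh : nat -> 'rV[R]_N) (xh : nat -> 'M[R]_N)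
  (phi0 : 'rV[R]_d) (lam : R) (A : vr_alg) (P : bool) (ts : seq nat) : 'rV[R]_d :=
  let G0 := fun t => gradFt t (gh t) (xh t) phi0 in
  let Gbar0 := (T%:R)^-1 *: \sum_(1 <= t < T.+1) G0 t in
  st_phi (foldl (vr_step lam A P) (VRState ah bh gh xh phi0 G0 Gbar0) ts).

End VRSO.

(* Probability of an event under M i.i.d. uniform draws from {1,...,T}:
   a draw sequence is s : M.-tuple 'I_T, where i : 'I_T stands for i+1. *)
Definition unif_draws (M T : nat) (s : M.-tuple 'I_T) : seq nat :=
  [seq (val i).+1 | i <- s].

Definition prob_draws {R : realType} (M T : nat) (E : seq nat -> bool) : R :=
  (#|[set s : M.-tuple 'I_T | E (unif_draws s)]|%:R) / ((T ^ M)%N%:R).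

From HB Require Import structures.
From mathcomp Require Import all_boot all_order all_algebra.
From mathcomp Require Import all_classical all_reals all_analysis.
From mathcomp Require Import zify.
Set Implicit Arguments. Unset Strict Implicit. Unset Printing Implicit Defensive.
Import Order.TTheory GRing.Theory Num.Theory.
Import numFieldNormedType.Exports.
Local Open Scope ring_scope.

(* The exact forward and backward vectors are fixed points of the one-step
   maps alpha_tilde and beta_tilde, so at phi0 every refresh VRSO-PE performs
   reproduces the exact alpha, beta, gamma and xi, and the stochastic gradient
   at the drawn index equals its stored table entry.  The update direction
   thus reduces to the table average, which by linearity of differentiation is
   grad F(phi0 | gamma(phi0), xi(phi0)) = 0.  Hence phi and all tables stay
   exact along every run, whatever the draws. *)

Section SumDerivative.
Variables (R : realType) (V W : normedModType R).

Lemma differentiable_big_sum (I : Type) (r : seq I) (P : pred I)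
    (h : I -> V -> W) x :
  (forall i, P i -> differentiable (h i) x) ->
  differentiable (fun q => \sum_(i <- r | P i) h i q) x.
Proof.
move=> dh; rewrite -fct_sumE; elim/big_ind: _ => //.
by move=> f g; exact: differentiableD.
Qed.

Lemma is_derive_big_sum (I : Type) (r : seq I) (P : pred I)
    (h : I -> V -> W) (dh : I -> W) x v :
  (forall i, P i -> is_derive x v (h i) (dh i)) ->
  is_derive x v (fun q => \sum_(i <- r | P i) h i q) (\sum_(i <- r | P i) dh i).
Proof.
move=> hd; rewrite -fct_sumE; elim/big_ind2: _ => //; first exact: is_derive_cst.
by move=> f a g b fa gb; exact: is_deriveD.
Qed.

Lemma differentiable_ln (f : V -> R) x :
  differentiable f x -> 0 < f x -> differentiable (fun q => ln (f q)) x.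
Proof.
move=> df fx_gt0; apply: (differentiable_comp (g := @ln R) df).
by apply/derivable1_diffP; case: (is_derive1_ln fx_gt0).
Qed.

End SumDerivative.

Lemma upd_eq_in (X : Type) (D : pred nat) (f g : nat -> X) t v :
  {in D, f =1 g} -> (t \in D -> v = g t) -> {in D, upd f t v =1 g}.
Proof.
by move=> fg vg s; rewrite /upd; case: eqP => [-> | _]; [exact: vg | exact: fg].
Qed.

Lemma foldl_invariant (S X : Type) (I : S -> Prop) (D : pred X) (f : S -> X -> S) :
  (forall s x, x \in D -> I s -> I (f s x)) ->
  forall ts s, all D ts -> I s -> I (foldl f s ts).
Proof.
move=> fI; elim=> [//|x ts IH] s /= /andP[xD tsD] Is.
by apply: IH => //; exact: fI.
Qed.

Lemma prob_draws_sure (R : realType) (M T : nat) (E : seq nat -> bool) :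
  (0 < T)%N -> (forall ts, all [pred t | 0 < t <= T]%N ts -> E ts) ->
  prob_draws (R := R) M T E = 1.
Proof.
move=> T_gt0 sureE; rewrite /prob_draws.
have -> : [set s : M.-tuple 'I_T | E (unif_draws s)] = [set: M.-tuple 'I_T].
  apply/setP => s; rewrite !inE; apply: sureE.
  by rewrite all_map; apply/allP => i _ /=; exact: ltn_ord.
by rewrite cardsT card_tuple card_ord divff // pnatr_eq0 -lt0n expn_gt0 T_gt0.
Qed.

Section Stationarity.
Variables (R : realType) (Y : Type) (N d T : nat)
  (init : 'rV[R]_d -> 'rV[R]_N) (Gam : 'rV[R]_d -> 'M[R]_N)
  (emis : Y -> 'rV[R]_d -> 'rV[R]_N) (obs : nat -> Y) (phi0 : 'rV[R]_d).
Hypotheses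
  (init_pos : forall phi i, 0 < init phi 0 i)
  (Gam_pos : forall phi i j, 0 < Gam phi i j)
  (emis_pos : forall y phi i, 0 < emis y phi 0 i)
  (init_diff : forall phi i, differentiable (fun q => init q 0 i) phi)
  (Gam_diff : forall phi i j, differentiable (fun q => Gam q i j) phi)
  (emis_diff : forall y phi i, differentiable (fun q => emis y q 0 i) phi).

Local Notation horizon := [pred t : nat | 0 < t <= T]%N.
Local Notation al t := (alpha init Gam emis obs t phi0).
Local Notation be t := (beta Gam emis obs T t phi0).
Local Notation ga t := (gamma init Gam emis obs T t phi0).
Local Notation xx t := (xi init Gam emis obs T t phi0).
Local Notation gF t g x := (gradFt init Gam emis obs t g x phi0).

(* alpha_tilde 1 ignores its vector argument, which therefore only has to be
   exact for t > 1; dually for beta_tilde T. *)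
Lemma alpha_tildeE t a phi :
  (0 < t)%N -> ((1 < t)%N -> a = alpha init Gam emis obs t.-1 phi) ->
  alpha_tilde init Gam emis obs t a phi = alpha init Gam emis obs t phi.
Proof. by case: t => [//|[//|t]] _ /= ->. Qed.

Lemma beta_tildeE t b phi :
  (t <= T)%N -> ((t < T)%N -> b = beta Gam emis obs T t.+1 phi) ->
  beta_tilde Gam emis obs T t b phi = beta Gam emis obs T t phi.
Proof.
rewrite leq_eqVlt => /predU1P[-> _ | tT ->//].
  by rewrite /beta subnn /= /beta_tilde eqxx.
by rewrite /beta -(subnSK tT) /= /beta.
Qed.

Lemma Ft_xi_irrelevant t g x x' : (t < 2)%N ->
  Ft init Gam emis obs t g x = Ft init Gam emis obs t g x'.
Proof. by rewrite /Ft ltnNge => /negbTE ->. Qed.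

Lemma differentiable_Ft t g x phi : differentiable (Ft init Gam emis obs t g x) phi.
Proof.
have dMln (c : R) (f : 'rV[R]_d -> R) : (forall q, 0 < f q) ->
    (forall q, differentiable f q) -> differentiable (fun q => c * ln (f q)) phi.
  by move=> f_gt0 df; apply: differentiableM => //; exact: differentiable_ln.
rewrite /Ft; apply/differentiableN/differentiableD; first apply: differentiableD.
- case: eqP => _ //.
  by apply: differentiable_big_sum => i _; exact: dMln.
- case: leqP => _ //.
  apply: differentiable_big_sum => i _; apply: differentiable_big_sum => j _.
  exact: dMln.
- by apply: differentiable_big_sum => i _; exact: dMln.
Qed.

Lemma grad_Ffull gs xs phi :
  grad (Ffull init Gam emis obs T gs xs) phi =
  T%:R^-1 *: \sum_(1 <= t < T.+1) gradFt init Gam emis obs t (gs t) (xs t) phi.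
Proof.
apply/rowP => k; rewrite !mxE summxE.
set v := delta_mx 0 k.
have dF : is_derive phi v (Ffull init Gam emis obs T gs xs)
    (T%:R^-1 *: \sum_(1 <= t < T.+1) 'D_v (Ft init Gam emis obs t (gs t) (xs t)) phi).
  apply: is_deriveZ; apply: is_derive_big_sum => t _.
  by apply/derivableP/diff_derivable; exact: differentiable_Ft.
by rewrite derive_val; congr (_ * _); apply: eq_bigr => t _; rewrite mxE.
Qed.

Record exact_state (s : vr_state R N d) : Prop := ExactState {
  exact_phi : st_phi s = phi0;
  exact_Gbar : st_Gbar s = 0;
  exact_a : {in horizon, st_a s =1 fun t => al t};
  exact_b : {in horizon, st_b s =1 fun t => be t};
  exact_g : {in horizon, st_g s =1 fun t => ga t};
  exact_x : {in [pred t | 1 < t <= T]%N, st_x s =1 fun t => xx t};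
  exact_G : {in horizon, st_G s =1 fun t => gF t (ga t) (xx t)}
}.

Lemma exact_state_step lam A P s t : t \in horizon -> exact_state s ->
  exact_state (vr_step init Gam emis obs T lam A P s t).
Proof.
move=> ht [Hphi HGbar Ha Hb Hg Hx HG]; rewrite /vr_step Hphi /=.
have /andP[t_gt0 tT] := ht.
set a' := (if P then _ else _); set b' := (if P then _ else _).
set g' := (if P then _ else _); set x' := (if P then _ else _).
have Ha' : {in horizon, a' =1 fun t => al t}.
  rewrite /a'; case: ifP => _ //; apply: upd_eq_in => // _.
  by apply: alpha_tildeE => // t_gt1; rewrite Ha // inE; lia.
have Hb' : {in horizon, b' =1 fun t => be t}.
  rewrite /b'; case: ifP => _ //; apply: upd_eq_in => // _.
  by apply: beta_tildeE => // tlT; rewrite Hb // inE; lia.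
have Hg' : {in horizon, g' =1 fun t => ga t}.
  by rewrite /g'; case: ifP => _ //; apply: upd_eq_in => // _; rewrite Ha' ?Hb'.
have Hx' : {in [pred t | 1 < t <= T]%N, x' =1 fun t => xx t}.
  rewrite /x'; case: ifP => _ //; apply: upd_eq_in => // /andP[t_gt1 _].
  by rewrite Ha' ?Hb' // inE; lia.
have grad_t : gF t (g' t) (x' t) = st_G s t.
  rewrite HG // Hg' //; case: (ltnP t 2) => [t_lt2 | t_ge2].
    by rewrite /gradFt (Ft_xi_irrelevant _ _ (xx t) t_lt2).
  by rewrite Hx' // inE t_ge2.
rewrite grad_t HGbar subrr add0r scaler0 subr0.
split=> //=.
- by case: A => //=; rewrite /upd eqxx subrr scaler0 addr0.
- by case: A => //; apply: upd_eq_in => // _; exact: HG.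
Qed.

Lemma exact_state_init (ah bh gh : nat -> 'rV[R]_N) (xh : nat -> 'M[R]_N) :
  {in horizon, ah =1 fun t => al t} -> {in horizon, bh =1 fun t => be t} ->
  {in horizon, gh =1 fun t => ga t} -> {in horizon, xh =1 fun t => xx t} ->
  grad (Ffull init Gam emis obs T (fun t => ga t) (fun t => xx t)) phi0 = 0 ->
  let G0 t := gF t (gh t) (xh t) in
  exact_state (VRState ah bh gh xh phi0 G0 (T%:R^-1 *: \sum_(1 <= t < T.+1) G0 t)).
Proof.
move=> Ha Hb Hg Hx stationary G0.
have HG : {in horizon, G0 =1 fun t => gF t (ga t) (xx t)}.
  by move=> t ht; rewrite /G0 Hg ?Hx.
split=> //=; last by move=> t /andP[t_gt1 tT]; apply: Hx; rewrite inE tT ltnW.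
rewrite grad_Ffull // in stationary; rewrite -[RHS]stationary; congr (_ *: _).
by apply: eq_big_nat => t ht; exact: HG.
Qed.

End Stationarity.

Theorem lemma6 (R : realType) (Y : Type) (N d T : nat)
  (init : 'rV[R]_d -> 'rV[R]_N) (Gam : 'rV[R]_d -> 'M[R]_N)
  (emis : Y -> 'rV[R]_d -> 'rV[R]_N) (obs : nat -> Y)
  (* standing assumptions on the HMM *)
  (HT : (0 < T)%N)
  (init_pos : forall phi i, 0 < init phi 0 i)
  (init_sum : forall phi, \sum_i init phi 0 i = 1)
  (Gam_pos : forall phi i j, 0 < Gam phi i j)
  (Gam_sum : forall phi i, \sum_j Gam phi i j = 1)
  (emis_pos : forall y phi i, 0 < emis y phi 0 i)
  (init_diff : forall phi i, differentiable (fun q => init q 0 i) phi)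
  (Gam_diff : forall phi i j, differentiable (fun q => Gam q i j) phi)
  (emis_diff : forall y phi i, differentiable (fun q => emis y q 0 i) phi)
  (* the input of VRSO-PE *)
  (phi0 : 'rV[R]_d) (ah bh gh : nat -> 'rV[R]_N) (xh : nat -> 'M[R]_N)
  (H1 : forall t, (1 <= t <= T)%N ->
          ah t = alpha init Gam emis obs t phi0 /\ bh t = beta Gam emis obs T t phi0)
  (H2 : forall t, (1 <= t <= T)%N ->
          gh t = gamma init Gam emis obs T t phi0 /\ xh t = xi init Gam emis obs T t phi0)
  (H3 : grad (Ffull init Gam emis obs T (fun t => gamma init Gam emis obs T t phi0)
                                        (fun t => xi init Gam emis obs T t phi0)) phi0 = 0) :
  forall (lam : R) (A : vr_alg) (P : bool) (M : nat),
    prob_draws (R := R) M T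
      (fun ts => vrso_pe init Gam emis obs T ah bh gh xh phi0 lam A P ts == phi0) = 1.
Proof.
move=> lam A P M; apply: prob_draws_sure => // ts ts_in; apply/eqP.
have s0 := exact_state_init init_pos Gam_pos emis_pos init_diff Gam_diff emis_diff
  (fun t ht => (H1 t ht).1) (fun t ht => (H1 t ht).2)
  (fun t ht => (H2 t ht).1) (fun t ht => (H2 t ht).2) H3.
exact: exact_phi (foldl_invariant (exact_state_step lam A P) ts_in s0).
Qed.
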